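(* The class $\mathcal W$ is contained in the class $\mathcal A$; i.e., every bounded directoid with unary operation satisfying (ii), (iii), (iv) and the identity (i') also satisfies condition (i). (Hence $\mathcal W$ is a variety contained in $\mathcal A$.)
   Context: A bounded directoid with unary operation is an algebra $(P,\sqcup,{}',0,1)$ of type $(2,1,0,0)$ satisfying $x\sqcup x=x$, $x\sqcup y=y\sqcup x$, $x\sqcup((x\sqcup y)\sqcup z)=(x\sqcup y)\sqcup z$, $x\sqcup 0=x$, $x\sqcup 1=1$. Its induced order is $x\leq y$ iff $x\sqcup y=y$ (a partial order with least element $0$ and greatest element $1$). Put $x\sqcap y:=(x'\sqcup y')'$. Conditions: (i) for all $x,y,z$: if $(x\sqcup z)\sqcup(((x'\sqcap w)\sqcap((x\sqcup y)\sqcap w))\sqcup z)=z$ for all $w\in P$, then $(x\sqcup y)\sqcup z=z$; (ii) $(x\sqcap y)\sqcup x\approx x$; (iii) $(x\sqcup y)\sqcup(x'\sqcup y)\approx 1$; (iv) $x''\approx x$; (i') $x\sqcup y\leq(x\sqcup z)\sqcup((x'\sqcap(x\sqcup y))\sqcup z)$, i.e. the identity $(x\sqcup y)\sqcup t\approx t$ where $t=(x\sqcup z)\sqcup((x'\sqcap(x\sqcup y))\sqcup z)$. $\mathcal A$ is the class of bounded directoids with unary operation satisfying (i)–(iv) (equivalently, the directoids assigned to generalized orthomodular posets); $\mathcal W$ is the variety of bounded directoids with unary operation satisfying (ii), (iii), (iv) and (i'). *)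

Record BDirectoidU := {
  carrier :> Type;
  join : carrier -> carrier -> carrier;
  cmp : carrier -> carrier;
  bot : carrier;
  top : carrier;
  join_idem : forall x, join x x = x;
  join_comm : forall x y, join x y = join y x;
  join_dir : forall x y z, join x (join (join x y) z) = join (join x y) z;
  join_bot : forall x, join x bot = x;
  join_top : forall x, join x top = top
}.

Arguments join {b}.
Arguments cmp {b}.
Arguments bot {b}.
Arguments top {b}.

Definition meet {P : BDirectoidU} (x y : P) : P := cmp (join (cmp x) (cmp y)).

Definition cond_i (P : BDirectoidU) : Prop :=
  forall x y z : P,
    (forall w : P,
       join (join x z)
            (join (meet (meet (cmp x) w) (meet (join x y) w)) z) = z) ->
    join (join x y) z = z.

Definition cond_ii (P : BDirectoidU) : Prop :=
  forall x y : P, join (meet x y) x = x.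

Definition cond_iii (P : BDirectoidU) : Prop :=
  forall x y : P, join (join x y) (join (cmp x) y) = top.

Definition cond_iv (P : BDirectoidU) : Prop :=
  forall x : P, cmp (cmp x) = x.

Definition cond_i' (P : BDirectoidU) : Prop :=
  forall x y z : P,
    join (join x y)
         (join (join x z) (join (meet (cmp x) (join x y)) z))
    = join (join x z) (join (meet (cmp x) (join x y)) z).

Definition in_A (P : BDirectoidU) : Prop :=
  cond_i P /\ cond_ii P /\ cond_iii P /\ cond_iv P.

Definition in_W (P : BDirectoidU) : Prop :=
  cond_ii P /\ cond_iii P /\ cond_iv P /\ cond_i' P.


(* Conditions (ii), (iii), (iv) are shared by
   the two classes, so the only point is to derive the quasi-identity (i)
   from the identity (i') (with the help of the involution law (iv)).

   The hypothesis of (i) quantifies over all w; we use only the instance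
   w := x ⊔ y.  Writing a := x ⊔ y, the term appearing there is
   (x' ⊓ a) ⊓ (a ⊓ a), and under (iv) it collapses to x' ⊓ a because
   - the meet is idempotent, a ⊓ a = a, and
   - the meet absorbs its right argument, (u ⊓ a) ⊓ a = u ⊓ a,
   the latter being the dual of the directoid law (u ⊔ v) ⊔ v = u ⊔ v.
   After this simplification the hypothesis of (i) says exactly that the
   right-hand side of (i') equals z, and (i') then gives (x ⊔ y) ⊔ z = z. *)

Section DirectoidFacts.

Variable P : BDirectoidU.

Lemma join_absorb_r (u v : P) : join (join u v) v = join u v.
Proof.
  pose proof (join_dir P v u (join v u)) as Hdir.
  rewrite !join_idem in Hdir.
  rewrite (join_comm P u v), join_comm.
  exact Hdir.
Qed.

Hypothesis Hinv : cond_iv P.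

Lemma meet_idem (a : P) : meet a a = a.
Proof. unfold meet. rewrite join_idem. apply Hinv. Qed.

(* Dual of [join_absorb_r]: meeting again with a factor changes nothing. *)
Lemma meet_absorb_r (u a : P) : meet (meet u a) a = meet u a.
Proof. unfold meet. rewrite Hinv, join_absorb_r. reflexivity. Qed.

Lemma cond_i_of_cond_i' : cond_i' P -> cond_i P.
Proof.
  intros Hi' x y z Hw.
  specialize (Hw (join x y)).
  rewrite meet_idem, meet_absorb_r in Hw.
  pose proof (Hi' x y z) as Hid.
  rewrite Hw in Hid.
  exact Hid.
Qed.

End DirectoidFacts.

Theorem mainTheorem6 : forall P : BDirectoidU, in_W P -> in_A P.
Proof.
  intros P [Hii [Hiii [Hiv Hi']]].
  unfold in_A.
  split; [| split; [| split]].
  - exact (cond_i_of_cond_i' P Hiv Hi').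
  - exact Hii.
  - exact Hiii.
  - exact Hiv.
Qed.
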